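(* Let $p,q,r\in\mathbb{N}$ with $p,r>1$, and let $T$ be a group of finite exponent $t\in\mathbb{N}$ (i.e. $g^t=1$ for all $g\in T$). For every labelling $\lambda\colon S(p,q,r)\to T$ there exist a labelling $\mu\colon S(tp,q,tr)\to T$ and a digraph epimorphism $\phi\colon\mathbb{S}(tp,q,tr)\to\mathbb{S}(p,q,r)$ such that $\mu(x)^{-1}\mu(y)=\lambda(\phi(y))$ for every edge $(x,y)$ of $\mathbb{S}(tp,q,tr)$. Moreover, for any $x_0\in S(tp,q,tr)$ and any $\alpha\in T$, $\mu$ can be chosen with $\mu(x_0)=\alpha$.
   Context: For $p,q,r\in\mathbb{N}$ with $p,r>1$, the spiral digraph $\mathbb{S}(p,q,r)=(S(p,q,r);s)$ has $p+q+r-2$ vertices $S(p,q,r)=\{a_1,\dots,a_p\}\cup\{b_1,\dots,b_q\}\cup\{c_1,\dots,c_r\}$ where $a_p=b_1$ and $b_q=c_1$ (and otherwise all distinct), and edge set $s=\{(a_i,a_{i+1}):i\in[p-1]\}\cup\{(b_i,b_{i+1}):i\in[q-1]\}\cup\{(c_i,c_{i+1}):i\in[r-1]\}\cup\{(a_p,a_1),(c_r,c_1)\}$. A digraph epimorphism $\phi\colon(B;s^B)\to(A;s^A)$ is a surjection $B\to A$ with $\{(\phi(x),\phi(y)):(x,y)\in s^B\}=s^A$. *)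

From mathcomp Require Import all_boot.
Set Implicit Arguments. Unset Strict Implicit. Unset Printing Implicit Defensive.

Record GroupOn (T : Type) := {
  gmul : T -> T -> T;
  ginv : T -> T;
  gone : T;
  gmulA : forall x y z, gmul x (gmul y z) = gmul (gmul x y) z;
  gmul1g : forall x, gmul gone x = x;
  gmulVg : forall x, gmul (ginv x) x = gone
}.

Fixpoint gpow (T : Type) (G : GroupOn T) (n : nat) (g : T) : T :=
  match n with 0 => gone G | n'.+1 => gmul G g (gpow G n' g) end.

(* Its p+q+r-2 vertices are encoded as the
   ordinals 'I_(p+q+r-2) via
     a_i |-> i-1          (1 <= i <= p)
     b_j |-> p+j-2        (1 <= j <= q)   (so b_1 = a_p)
     c_k |-> p+q+k-3      (1 <= k <= r)   (so c_1 = b_q)             *)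
Definition spiral_vertex (p q r : nat) := 'I_(p + q + r - 2).

Definition sa (p q r i : nat) : nat := i - 1.
Definition sb (p q r j : nat) : nat := p + j - 2.
Definition sc (p q r k : nat) : nat := p + q + k - 3.

Definition spiral_edge (p q r : nat) (x y : spiral_vertex p q r) : Prop :=
  let x := nat_of_ord x in let y := nat_of_ord y in
  (exists i, 1 <= i < p /\ x = sa p q r i /\ y = sa p q r i.+1) \/
  (exists j, 1 <= j < q /\ x = sb p q r j /\ y = sb p q r j.+1) \/
  (exists k, 1 <= k < r /\ x = sc p q r k /\ y = sc p q r k.+1) \/
  (x = sa p q r p /\ y = sa p q r 1) \/
  (x = sc p q r r /\ y = sc p q r 1).

Definition spiral_epi (p' q' r' p q r : nat)
    (phi : spiral_vertex p' q' r' -> spiral_vertex p q r) : Prop :=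
  (forall u, exists x, phi x = u) /\
  (forall x y, spiral_edge x y -> spiral_edge (phi x) (phi y)) /\
  (forall u v, spiral_edge u v ->
     exists x y, spiral_edge x y /\ phi x = u /\ phi y = v).

From mathcomp Require Import all_boot zify.
Set Implicit Arguments. Unset Strict Implicit. Unset Printing Implicit Defensive.

(* Number the vertices of a spiral 0, 1, ... along the spiral.  The epimorphism
   winds the a-cycle of S(tp,q,tr) t times around the a-cycle of S(p,q,r),
   copies the b-path, and winds the c-cycle t times around the c-cycle.  Along
   this walk, mu is the running product of the labels lambda(phi y) of the
   visited vertices, premultiplied by a constant that fixes mu(x0) = alpha.
   The edge condition then holds on the path edges by construction, and on
   the two closing edges because the labels around a cycle of S(tp,q,tr) are a
   period repeated t times: their product is a t-th power, hence 1. *)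

Lemma periodicMn (A : Type) (g : nat -> A) p n i :
  (forall i, g (i + p) = g i) -> g (i + n * p) = g i.
Proof.
move=> perg; elim: n => [|n IHn]; first by rewrite addn0.
by rewrite mulSnr addnA perg.
Qed.

Section GroupFacts.
Variables (T : Type) (G : GroupOn T).
Local Notation "x *g y" := (gmul G x y) (at level 40, left associativity).
Local Notation "x ^-1" := (ginv G x).
Local Notation one := (gone G).

Lemma gmulgV x : x *g x^-1 = one.
Proof.
have idem : (x *g x^-1) *g (x *g x^-1) = x *g x^-1.
  by rewrite -gmulA (gmulA G x^-1 x x^-1) gmulVg gmul1g.
by rewrite -[LHS](gmul1g G) -(gmulVg G (x *g x^-1)) -gmulA idem.
Qed.

Lemma gmulg1 x : x *g one = x.
Proof. by rewrite -(gmulVg G x) gmulA gmulgV gmul1g. Qed.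

Lemma gmulKg x y : x^-1 *g (x *g y) = y.
Proof. by rewrite gmulA gmulVg gmul1g. Qed.

Lemma gpowSr n g : gpow G n.+1 g = gpow G n g *g g.
Proof. by elim: n => [|n IH] /=; rewrite ?gmulg1 ?gmul1g // -gmulA -IH. Qed.

Fixpoint gprod (F : nat -> T) (n : nat) : T :=
  if n is n'.+1 then gprod F n' *g F n else one.

Lemma gprodD F m n : gprod F (m + n) = gprod F m *g gprod (fun i => F (m + i)) n.
Proof. by elim: n => [|n IH] /=; rewrite ?addn0 ?gmulg1 // addnS /= IH gmulA. Qed.

Lemma eq_gprod F F' n : (forall i, 0 < i <= n -> F i = F' i) -> gprod F n = gprod F' n.
Proof.
elim: n => [|n IH] //= eqF; rewrite eqF ?ltnSn // IH // => i /andP[i_gt0 i_le].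
by rewrite eqF // i_gt0 leqW.
Qed.

Lemma gprod_periodic F p n : (forall i, F (i + p) = F i) ->
  gprod F (n * p) = gpow G n (gprod F p).
Proof.
move=> perF; elim: n => [|n IH] //.
rewrite mulSnr gprodD IH gpowSr; congr (_ *g _); apply: eq_gprod => i _.
by rewrite addnC periodicMn.
Qed.

Lemma gprod_cycle F g a t p : 0 < t * p -> (forall x, gpow G t x = one) ->
    (forall i, g (i + p) = g i) -> (forall i, i < t * p -> F (a + i) = g i) ->
  gprod (fun i => F (a + i)) (t * p - 1) *g F a = one.
Proof.
move=> tp_gt0 expt perg Fg; have tp_eq : (t * p - 1).+1 = t * p by lia.
have ->: gprod (fun i => F (a + i)) (t * p - 1) = gprod g (t * p - 1).
  by apply: eq_gprod => i /andP[_ i_le]; rewrite Fg //; lia.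
rewrite -(addn0 a) Fg // -[g 0](periodicMn t 0 perg) add0n -[in g _]tp_eq.
by rewrite -/(gprod g (t * p - 1).+1) tp_eq gprod_periodic // expt.
Qed.

Definition walk_label (c : T) (F : nat -> T) (n : nat) : T := c *g gprod F n.

Lemma walk_label_step c F n : (walk_label c F n)^-1 *g walk_label c F n.+1 = F n.+1.
Proof. by rewrite /walk_label /= (gmulA G c) gmulKg. Qed.

Lemma walk_label_cycle c F a m : gprod (fun i => F (a + i)) m *g F a = one ->
  (walk_label c F (a + m))^-1 *g walk_label c F a = F a.
Proof.
move=> closing; rewrite -[walk_label c F a]gmulg1 -closing.
rewrite /walk_label gprodD.
by rewrite (gmulA G c) [X in _^-1 *g X]gmulA gmulKg.
Qed.

End GroupFacts.

Definition spiral_step (p q r x y : nat) : Prop :=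
  y = x.+1 \/ (x = p - 1 /\ y = 0) \/ (x = p + q + r - 3 /\ y = p + q - 2).

Lemma spiral_edgeE p q r : 1 < p -> 0 < q -> 1 < r ->
  forall x y : spiral_vertex p q r, spiral_edge x y <-> spiral_step p q r x y.
Proof.
move=> hp hq hr x y; have := ltn_ord x; have := ltn_ord y.
rewrite /spiral_edge /spiral_step /sa /sb /sc /=.
move: (nat_of_ord x) (nat_of_ord y) => a b ha hb; split.
  case=> [[i]|[[j]|[[k]|[]]]]; lia.
case=> [succ|[[-> ->]|[-> ->]]]; last 2 first.
- by right; right; right; left; lia.
- by right; right; right; right; lia.
have [a_lt|a_ge] := ltnP a.+1 p; first by left; exists a.+1; lia.
have [ab_lt|ab_ge] := ltnP a (p + q - 2); first by right; left; exists (a + 2 - p); lia.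
by right; right; left; exists (a + 3 - p - q); lia.
Qed.

Lemma spiral_step_out p q r u : 1 < p -> 0 < q -> 1 < r ->
  u < p + q + r - 2 -> exists2 v, v < p + q + r - 2 & spiral_step p q r u v.
Proof.
move=> hp hq hr hu; have [u_last|u_lt] := eqVneq u (p + q + r - 3).
  by exists (p + q - 2); [lia | right; right].
by exists u.+1; [lia | left].
Qed.

Section EpiOfFold.
Variables (p' q' r' p q r : nat) (f : nat -> nat).
Hypotheses (hp' : 1 < p') (hq' : 0 < q') (hr' : 1 < r').
Hypotheses (hp : 1 < p) (hq : 0 < q) (hr : 1 < r).
Hypothesis f_lt : forall x, f x < p + q + r - 2.
Hypothesis f_step : forall x y,
  spiral_step p' q' r' x y -> spiral_step p q r (f x) (f y).
Hypothesis f_step_onto : forall u v, u < p + q + r - 2 -> v < p + q + r - 2 ->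
  spiral_step p q r u v -> exists x y, [/\ x < p' + q' + r' - 2,
    y < p' + q' + r' - 2, spiral_step p' q' r' x y, f x = u & f y = v].

Definition fold_vertex (x : spiral_vertex p' q' r') : spiral_vertex p q r :=
  Ordinal (f_lt x).

Lemma fold_vertex_epi : spiral_epi fold_vertex.
Proof.
have edge_onto u v : spiral_edge u v -> exists x y, [/\ spiral_edge x y,
    fold_vertex x = u & fold_vertex y = v].
  move=> /(spiral_edgeE hp hq hr) /(f_step_onto (ltn_ord u) (ltn_ord v)).
  case=> x [y [x_lt y_lt xy fx fy]]; exists (Ordinal x_lt), (Ordinal y_lt).
  by split; [exact/(spiral_edgeE hp' hq' hr') | exact: val_inj | exact: val_inj].
split; [|split].
- move=> u; have [v v_lt uv] := spiral_step_out hp hq hr (ltn_ord u).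
  have /edge_onto[x [_ [_ fx _]]] : spiral_edge u (Ordinal v_lt).
    exact/(spiral_edgeE hp hq hr).
  by exists x.
- move=> x y /(spiral_edgeE hp' hq' hr') /f_step fxy.
  exact/(spiral_edgeE hp hq hr (fold_vertex x) (fold_vertex y)).
- by move=> u v /edge_onto[x [y [xy fx fy]]]; exists x, y.
Qed.

End EpiOfFold.

Lemma modnS_cases x d : 0 < d ->
  x.+1 %% d = (x %% d).+1 \/ (x %% d = d - 1 /\ x.+1 %% d = 0).
Proof.
move=> d_gt0; have := ltn_mod x d; rewrite d_gt0 => x_mod_lt.
have -> : x.+1 = x %/ d * d + (x %% d).+1 by rewrite {1}(divn_eq x d) addnS.
rewrite modnMDl; have [lt_d|ge_d] := ltnP (x %% d).+1 d.
  by left; rewrite modn_small.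
right; have succ_d : (x %% d).+1 = d by lia.
by rewrite succ_d modnn; split => //; lia.
Qed.

Lemma modn_subDl t d u : (t * d - d + u) %% d = u %% d.
Proof. by rewrite -[X in _ - X]mul1n -mulnBl modnMDl. Qed.

Lemma modn_mul_sub1 t d : 0 < t -> 0 < d -> (t * d - 1) %% d = d - 1.
Proof.
move=> t_gt0 d_gt0; have := leq_pmull d t_gt0 => d_le.
by rewrite (_ : t * d - 1 = t * d - d + (d - 1)) ?modn_subDl ?modn_small //; lia.
Qed.

Definition spiral_fold (p q r t x : nat) : nat :=
  if x < t * p then x %% p
  else if x < t * p + q - 2 then x + p - t * p
  else p + q - 2 + (x - (t * p + q - 2)) %% r.

Section SpiralFold.
Variables p q r t : nat.
Hypotheses (hp : 1 < p) (hq : 0 < q) (hr : 1 < r) (ht : 0 < t).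
Local Notation f := (spiral_fold p q r t).

Lemma spiral_fold_a x : x < t * p -> f x = x %% p.
Proof. by move=> x_lt; rewrite /spiral_fold x_lt. Qed.

Lemma spiral_fold_c i : f (t * p + q - 2 + i) = p + q - 2 + i %% r.
Proof.
have := leq_pmull p ht => p_le; rewrite /spiral_fold.
have [_|x_lt] := leqP (t * p) (t * p + q - 2 + i).
  by rewrite ifF; [congr (_ + _ %% _) | ]; lia.
have [q1 i0] : q = 1 /\ i = 0 by lia.
rewrite q1 i0 mod0n !addn0 (_ : t * p + 1 - 2 = t * p - 1); last by lia.
by rewrite modn_mul_sub1 //; lia.
Qed.

Lemma spiral_fold_shift u : u < p + q + r - 2 -> f (u + (t * p - p)) = u.
Proof.
move=> u_lt; have := leq_pmull p ht => p_le.
have [u_lt_p|u_ge_p] := ltnP u p.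
  rewrite spiral_fold_a; last by lia.
  by rewrite addnC modn_subDl modn_small.
have [u_lt_c|u_ge_c] := ltnP u (p + q - 2).
  rewrite /spiral_fold ifF; last by lia.
  rewrite ifT; lia.
have -> : u + (t * p - p) = t * p + q - 2 + (u - (p + q - 2)) by lia.
rewrite spiral_fold_c modn_small; lia.
Qed.

Lemma spiral_fold_lt x : f x < p + q + r - 2.
Proof.
rewrite /spiral_fold; case: ifP => x_lt_a; first by have := ltn_pmod x (ltnW hp); lia.
case: ifP => x_lt_b; first by lia.
by have := ltn_pmod (x - (t * p + q - 2)) (ltnW hr); lia.
Qed.

Lemma spiral_fold_succ x : spiral_step p q r (f x) (f x.+1).
Proof.
have := leq_pmull p ht => p_le.
have [x_lt_a|x_ge_a] := ltnP x.+1 (t * p).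
  rewrite !spiral_fold_a; try lia.
  by case: (modnS_cases x (ltnW hp)) => [->|[-> ->]]; [left | right; left].
have [x_lt_c|x_ge_c] := ltnP x (t * p + q - 2).
  have ex : x = x - (t * p - p) + (t * p - p) by lia.
  rewrite ex -addSn !spiral_fold_shift; [by left | lia | lia].
have ex : x = t * p + q - 2 + (x - (t * p + q - 2)) by lia.
rewrite ex -addnS !spiral_fold_c.
case: (modnS_cases (x - (t * p + q - 2)) (ltnW hr)) => [->|[-> ->]].
  by left; rewrite addnS.
by right; right; split; lia.
Qed.

Lemma spiral_fold_step x y :
  spiral_step (t * p) q (t * r) x y -> spiral_step p q r (f x) (f y).
Proof.
have := leq_pmull p ht => p_le; have := leq_pmull r ht => r_le.
case=> [->|[[-> ->]|[-> ->]]]; first exact: spiral_fold_succ.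
  by rewrite !spiral_fold_a ?mod0n ?modn_mul_sub1 /spiral_step; lia.
rewrite -[t * p + q - 2]addn0 spiral_fold_c mod0n.
rewrite (_ : _ + _ + _ - 3 = t * p + q - 2 + (t * r - 1)); last by lia.
by rewrite spiral_fold_c modn_mul_sub1 /spiral_step; lia.
Qed.

Lemma spiral_fold_step_onto u v : u < p + q + r - 2 -> v < p + q + r - 2 ->
  spiral_step p q r u v -> exists x y, [/\ x < t * p + q + t * r - 2,
    y < t * p + q + t * r - 2, spiral_step (t * p) q (t * r) x y, f x = u & f y = v].
Proof.
have := leq_pmull p ht => p_le; have := leq_pmull r ht => r_le.
move=> u_lt v_lt; case=> [v_succ|[[-> ->]|[-> ->]]].
- rewrite v_succ in v_lt *; exists (u + (t * p - p)), (u.+1 + (t * p - p)).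
  by rewrite !spiral_fold_shift /spiral_step; try split; lia.
- exists (t * p - 1), 0.
  by rewrite !spiral_fold_a ?mod0n ?modn_mul_sub1 /spiral_step; try split; lia.
- exists (t * p + q - 2 + (t * r - 1)), (t * p + q - 2 + 0).
  by rewrite !spiral_fold_c mod0n modn_mul_sub1 /spiral_step; try split; lia.
Qed.

End SpiralFold.

Theorem lemma4p1 (p q r : nat) (hp : 1 < p) (hq : 0 < q) (hr : 1 < r)
  (T : Type) (G : GroupOn T) (t : nat) (ht : 0 < t)
  (hexp : forall g : T, gpow G t g = gone G)
  (lambda : spiral_vertex p q r -> T)
  (x0 : spiral_vertex (t * p) q (t * r)) (alpha : T) :
  exists (mu : spiral_vertex (t * p) q (t * r) -> T)
         (phi : spiral_vertex (t * p) q (t * r) -> spiral_vertex p q r),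
    spiral_epi phi /\
    (forall x y, spiral_edge x y -> gmul G (ginv G (mu x)) (mu y) = lambda (phi y)) /\
    mu x0 = alpha.
Proof.
have p_le := leq_pmull p ht; have r_le := leq_pmull r ht.
have tp_gt1 : 1 < t * p by lia.
have tr_gt1 : 1 < t * r by lia.
(* The default label is never used: spiral_fold only takes vertex values. *)
pose L k := oapp lambda (gone G) (insub k).
pose F k := L (spiral_fold p q r t k).
pose c := gmul G alpha (ginv G (gprod G F x0)).
pose phi : spiral_vertex (t * p) q (t * r) -> spiral_vertex p q r :=
  fold_vertex (spiral_fold_lt hp hq hr ht).
exists (walk_label G c F), phi; split; [|split].
- apply: fold_vertex_epi => //.
  + exact: spiral_fold_step.
  + exact: spiral_fold_step_onto.
- move=> x y /(spiral_edgeE tp_gt1 hq tr_gt1).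
  have -> : lambda (phi y) = F y.
    by rewrite /F /L -[spiral_fold p q r t y]/(val (phi y)) valK.
  case=> [->|[[-> ->]|[-> ->]]]; first exact: walk_label_step.
  + apply: (walk_label_cycle c (a := 0)).
    apply: (gprod_cycle (g := fun i => L (i %% p))) => //; first by lia.
      by move=> i; rewrite modnDr.
    by move=> i i_lt; rewrite /F spiral_fold_a.
  + have -> : t * p + q + t * r - 3 = t * p + q - 2 + (t * r - 1) by lia.
    apply: walk_label_cycle.
    apply: (gprod_cycle (g := fun i => L (p + q - 2 + i %% r))) => //; first by lia.
      by move=> i; rewrite modnDr.
    by move=> i _; rewrite /F spiral_fold_c.
- by rewrite /walk_label -gmulA gmulVg gmulg1.
Qed.
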